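(* Let $q \geq 4$ be a power of $2$, and let $\mathcal{C} \subseteq (\mathbb{F}_{q^2})^{q^3}$ be the Hermitian-Lifted Code (defined in the context). Then the rate of $\mathcal{C}$, i.e. $\dim_{\mathbb{F}_{q^2}}(\mathcal{C})/q^3$, is at least $0.007$.
   Context: Let $q$ be a prime power. The Hermitian curve $\mathcal{H}_q$ is given by the affine equation $x^q + x = y^{q+1}$. Let $\mathcal{X} = \{(x,y) \in (\mathbb{F}_{q^2})^2 : x^q + x = y^{q+1}\}$ be its set of affine $\mathbb{F}_{q^2}$-rational points; $|\mathcal{X}| = q^3$. For $\alpha,\beta \in \mathbb{F}_{q^2}$, let $L_{\alpha,\beta}:\mathbb{F}_{q^2} \to (\mathbb{F}_{q^2})^2$, $L_{\alpha,\beta}(t) = (\alpha t + \beta, t)$, and let $\mathcal{L} = \{L_{\alpha,\beta} : \alpha,\beta \in \mathbb{F}_{q^2}\}$. For $f \in \mathbb{F}_{q^2}[x,y]$, $g \in \mathbb{F}_{q^2}[t]$ and $L \in \mathcal{L}$, say that $f\circ L$ agrees with $g$ on $\mathcal{X}$ if $f(L(t)) = g(t)$ for all $t \in \mathbb{F}_{q^2}$ with $L(t) \in \mathcal{X}$. Let $\mathcal{F}$ be the set of $f \in \mathbb{F}_{q^2}[x,y]$ such that for every $L \in \mathcal{L}$ there exists $g \in \mathbb{F}_{q^2}[t]$ with $\deg g \leq q-1$ such that $f \circ L$ agrees with $g$ on $\mathcal{X}$. The Hermitian-Lifted Code is $\mathcal{C} = \{ (f(P))_{P \in \mathcal{X}}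 : f \in \mathcal{F}\}$, a linear code of length $q^3$ over $\mathbb{F}_{q^2}$. *)

From HB Require Import structures.
From mathcomp Require Import all_boot all_order all_algebra.
From Stdlib Require Import ClassicalEpsilon.
Set Implicit Arguments. Unset Strict Implicit. Unset Printing Implicit Defensive.
Import GRing.Theory.
Local Open Scope ring_scope.

(* F plays the role of F_{q^2}; bivariate polynomials F[x,y] are represented
   as {poly {poly F}}: f = sum_i f_i(x) y^i. *)

Definition herm_pts (F : finFieldType) (q : nat) : {set F * F} :=
  [set p | p.1 ^+ q + p.1 == p.2 ^+ q.+1].

(* f(a, b) for f in F[x,y] (outer variable = y, inner variable = x). *)
Definition eval2 (F : finFieldType) (f : {poly {poly F}}) (a b : F) : F :=
  (f.[b%:P]).[a].

Definition in_lifted (F : finFieldType) (q : nat) (f : {poly {poly F}}) : Prop :=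
  forall alpha beta : F, exists g : {poly F},
    (size g <= q)%N /\
    forall t : F, (alpha * t + beta, t) \in herm_pts F q ->
      eval2 f (alpha * t + beta) t = g.[t].

Definition hl_word (F : finFieldType) (q : nat) (v : 'rV[F]_#|herm_pts F q|) : Prop :=
  exists f : {poly {poly F}}, in_lifted q f /\
    forall i : 'I_#|herm_pts F q|,
      v 0 i = eval2 f (enum_val i).1 (enum_val i).2.

Definition hl_wordb (F : finFieldType) (q : nat) (v : 'rV[F]_#|herm_pts F q|) : bool :=
  if excluded_middle_informative (hl_word v) then true else false.

(* The Hermitian-lifted code, as the F-subspace spanned by its codewords
   (the set of codewords is itself linear, so this is the code). *)
Definition hl_code (F : finFieldType) (q : nat) : {vspace 'rV[F]_#|herm_pts F q|} :=
  <<[seq v <- enum [set: 'rV[F]_#|herm_pts F q|] | hl_wordb v]>>%VS.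

From HB Require Import structures.
From mathcomp Require Import all_boot all_order all_algebra all_field.
From mathcomp Require Import ring zify.
From Stdlib Require Import ClassicalEpsilon.
Set Implicit Arguments. Unset Strict Implicit. Unset Printing Implicit Defensive.
Import GRing.Theory.

(* The monomials x^(2(Kq+U)) y^(2W) with 1 <= K <= q/4 and U, W < q/4 are q^3/64
   linearly independent codewords.
   Lifting: a point (a t + b, t) lies on the curve iff u := t - a^q satisfies
   u^(q+1) = D for a constant D, and then x^q u is affine in u.  Hence
   Z := x^(Kq+U) t^W satisfies Z u^K = h(u) with deg h = K + U + W.  In
   characteristic 2, writing h = L + u^K H gives Z^2 u^(2K) = L(u)^2 + u^(2K) H(u)^2,
   and u^(-2K) = u^(q+1-2K) / D, so Z^2 agrees with a polynomial in t of degree < q.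
   Independence: when x^q + x != 0 the fibre y^(q+1) = x^q + x has q+1 points,
   more than the y-degree, and there are q^2 - q such x, more than the x-degree. *)

Local Open Scope ring_scope.

Section Char2SquareReduction.
Variable F : fieldType.
Hypothesis char2F : 2 \in [pchar F].

(* If [u ^+ n = D != 0] then [u ^- (2 * K) = D^-1 * u ^+ (n - 2 * K)], and squaring
   is additive, so [(p.[u] / u ^+ K) ^+ 2] is the value of [sqr_reduce n D K p]
   at [u]. *)
Definition sqr_reduce (n : nat) (D : F) (K : nat) (p : {poly F}) : {poly F} :=
  D^-1 *: (take_poly K p ^+ 2 * 'X^(n - 2 * K)) + drop_poly K p ^+ 2.

Lemma horner_sqr_reduce n D K (p : {poly F}) (u Z : F) :
  u ^+ n = D -> D != 0 -> (2 * K <= n)%N -> Z * u ^+ K = p.[u] ->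
  Z ^+ 2 = (sqr_reduce n D K p).[u].
Proof.
move=> uD D0 Kn ZuK.
have uK0 : u ^+ (2 * K) != 0.
  by apply: contraNneq D0 => uK0; rewrite -uD -(subnK Kn) exprD uK0 mulr0.
have sqrD (x y : F) : (x + y) ^+ 2 = x ^+ 2 + y ^+ 2.
  by rewrite exprDn_pchar // pnatE.
apply: (mulIf uK0).
have -> : Z ^+ 2 * u ^+ (2 * K) = (Z * u ^+ K) ^+ 2 by rewrite exprMn -exprM mulnC.
rewrite ZuK -{1}(poly_take_drop K p).
rewrite /sqr_reduce !hornerE sqrD mulrDl exprMn -exprM mulnC.
rewrite -!mulrA -exprD subnK // uD.
by congr (_ + _); rewrite [RHS]mulrC -!mulrA mulfV // mulr1 expr2.
Qed.

Lemma size_sqr_reduce n D K (p : {poly F}) m :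
  (0 < K)%N -> (2 * K <= n <= m.+1)%N -> (2 * (size p - K) <= m.+1)%N ->
  (size (sqr_reduce n D K p) <= m)%N.
Proof.
move=> K0 /andP[Kn nm] pm.
have sL := size_poly_exp_leq (take_poly K p) 2.
have sH := size_poly_exp_leq (drop_poly K p) 2.
have sLX := size_polyMleq (take_poly K p ^+ 2) 'X^(n - 2 * K).
rewrite size_polyXn in sLX.
have sT := size_take_poly K p; rewrite size_drop_poly in sH.
apply: (leq_trans (size_polyD _ _)); rewrite geq_max; apply/andP; split.
  by apply: (leq_trans (size_scale_leq _ _)); lia.
lia.
Qed.

End Char2SquareReduction.

Lemma size_exp_linear (R : nzSemiRingType) (c d : R) n :
  (size ((c%:P * 'X + d%:P) ^+ n)%R <= n.+1)%N.
Proof.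
have s1 : (size (c%:P * 'X + d%:P)%R <= 2)%N.
  by rewrite size_MXaddC; case: ifP => // _; rewrite ltnS size_polyC leq_b1.
by apply: (leq_trans (size_poly_exp_leq _ _)); rewrite ltnS; nia.
Qed.

Section HermitianLines.
Variables (F : fieldType) (q : nat).
Hypothesis frobq : [pchar F].-nat q.
Hypothesis frobqK : forall x : F, x ^+ q ^+ q = x.

Let frobD (x y : F) : (x + y) ^+ q = x ^+ q + y ^+ q.
Proof. exact: exprDn_pchar. Qed.

Lemma herm_line_norm (a b t : F) :
  (a * t + b) ^+ q + (a * t + b) = t ^+ q.+1 ->
  (t - a ^+ q) ^+ q.+1 = b ^+ q + b + a ^+ q * a.
Proof.
move=> onH.
have tqt : t ^+ q * t = a ^+ q * t ^+ q + b ^+ q + (a * t + b).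
  by rewrite -exprSr -onH frobD exprMn.
rewrite exprSr frobD exprNn_pchar // frobqK.
transitivity (t ^+ q * t - a ^+ q * t ^+ q - a * t + a * a ^+ q); first ring.
by rewrite tqt; ring.
Qed.

Lemma herm_line_frob (a b t : F) :
  (a * t + b) ^+ q + (a * t + b) = t ^+ q.+1 ->
  (a * t + b) ^+ q * (t - a ^+ q) =
    a ^+ q * (b ^+ q + b + a ^+ q * a) + (a ^+ q * a + b) ^+ q * (t - a ^+ q).
Proof.
move=> /herm_line_norm uD.
have -> : a * t + b = a * (t - a ^+ q) + (a ^+ q * a + b) by ring.
by rewrite frobD exprMn mulrDl -(mulrA (a ^+ q)) -(exprSr (t - _)) uD.
Qed.

Hypothesis char2F : 2 \in [pchar F].

Lemma herm_line_monomial (a b : F) (K U W : nat) :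
  (0 < K)%N -> (2 * K <= q)%N -> (2 * (U + W) < q)%N ->
  exists g : {poly F}, (size g <= q)%N /\
    forall t, (a * t + b) ^+ q + (a * t + b) = t ^+ q.+1 ->
      (a * t + b) ^+ (2 * (K * q + U)) * t ^+ (2 * W) = g.[t].
Proof.
move=> K0 Kq UWq.
set D := b ^+ q + b + a ^+ q * a.
have [D0 | D0] := eqVneq D 0.
  exists ((a * a ^+ q + b) ^+ (2 * (K * q + U)) * a ^+ q ^+ (2 * W))%:P.
  split=> [|t /herm_line_norm]; first by rewrite size_polyC; case: (_ != 0); lia.
  by rewrite -/D D0 hornerC => /eqP; rewrite expf_eq0 subr_eq0 => /andP[_ /eqP->].
set B := a ^+ q * a + b.
pose lK : {poly F} := (B ^+ q)%:P * 'X + (a ^+ q * D)%:P.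
pose lU : {poly F} := a%:P * 'X + B%:P.
pose lW : {poly F} := 1%:P * 'X + (a ^+ q)%:P.
pose h := lK ^+ K * lU ^+ U * lW ^+ W.
exists (sqr_reduce q.+1 D K h \Po ('X - (a ^+ q)%:P)); split.
  rewrite size_comp_poly2 ?size_XsubC // size_sqr_reduce //; first by lia.
  have := size_polyMleq (lK ^+ K * lU ^+ U) (lW ^+ W).
  have := size_polyMleq (lK ^+ K) (lU ^+ U).
  have := size_exp_linear (B ^+ q) (a ^+ q * D) K.
  have := size_exp_linear a B U; have := size_exp_linear 1 (a ^+ q) W.
  rewrite -/lK -/lU -/lW -/h; lia.
move=> t onH; rewrite horner_comp hornerXsubC.
set x := a * t + b; set u := t - a ^+ q.
have hK : lK.[u] = x ^+ q * u.
  by rewrite /lK hornerMXaddC !hornerC /x /u herm_line_frob // addrC.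
have hU : lU.[u] = x by rewrite /lU hornerMXaddC !hornerC /x /u /B; ring.
have hW : lW.[u] = t by rewrite /lW hornerMXaddC !hornerC mul1r subrK.
have hu : (x ^+ (K * q + U) * t ^+ W) * u ^+ K = h.[u].
  rewrite /h !hornerM !horner_exp hK hU hW exprMn exprD mulnC exprM; ring.
rewrite -(horner_sqr_reduce char2F (herm_line_norm onH) D0 _ hu); last by lia.
by rewrite exprMn -!exprM !(mulnC 2).
Qed.

End HermitianLines.

Section RootCounting.
Variable R : finIdomainType.

Lemma card_roots_lt_size (p : {poly R}) :
  p != 0 -> (#|[set z | root p z]| < size p)%N.
Proof.
move=> p0; rewrite cardE; apply: max_poly_roots => //; last exact: enum_uniq.
by apply/allP => z; rewrite mem_enum inE.
Qed.

Lemma coef_monomial_sum_eq0 (I : finType) (P : pred I) (k : I -> R)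
    (n : I -> nat) (A : {set R}) :
  (forall i, P i -> n i < #|A|)%N ->
  {in A, forall z, \sum_(i | P i) k i * z ^+ n i = 0} ->
  forall m, \sum_(i | P i && (n i == m)) k i = 0.
Proof.
move=> nA vanish m.
pose p : {poly R} := \sum_(i | P i) k i *: 'X^(n i).
suff p0 : p = 0 by rewrite -coef_sumMXn -/p p0 coef0.
apply: (roots_geq_poly_eq0 (rs := enum A)).
- apply/allP => z; rewrite mem_enum rootE => /vanish sum0.
  rewrite horner_sum (eq_bigr (fun i => k i * z ^+ n i)) ?sum0 // => i _.
  by rewrite hornerZ hornerXn.
- exact: enum_uniq.
- rewrite -cardE; apply: (leq_trans (size_sum _ _ _)); apply/bigmax_leqP => i Pi.
  by rewrite (leq_trans (size_scale_leq _ _)) // size_polyXn nA.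
Qed.

End RootCounting.

Section HermitianIndependence.
Variables (F : finFieldType) (q : nat).
Hypothesis frobq : [pchar F].-nat q.
Hypothesis cardF : #|F| = (q * q)%N.

Let q_gt1 : (1 < q)%N.
Proof. by have := card_finNzRing_gt1 F; rewrite cardF; nia. Qed.

Lemma card_herm_fiber (n : F) :
  n != 0 -> n ^+ q = n -> (q.+1 <= #|[set y : F | y ^+ q.+1 == n]|)%N.
Proof.
move=> n0 nq.
have nq1 : n ^+ q.-1 = 1.
  by apply: (mulIf n0); rewrite mul1r -exprSr prednK ?nq //; lia.
pose S : {poly F} := \sum_(i < q.-1) 'X^(q.+1) ^+ (q.-1.-1 - i) * n%:P ^+ i.
have PS : ('X^(q.+1) - n%:P) * S = 'X^(q.+1 * q.-1)%N - 1%:P.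
  by rewrite /S -subrXX -exprM -polyC_exp nq1.
have N0 : (0 < q.+1 * q.-1)%N by rewrite muln_gt0; lia.
have S0 : S != 0.
  apply: contra_eqN PS => /eqP->; rewrite mulr0 eq_sym -size_poly_eq0.
  by rewrite size_XnsubC.
have sizeS : size S = (q.+1 * q.-1 - q)%N.
  have := size_mul (monic_neq0 (monicXnsubC n (ltn0Sn q))) S0.
  by rewrite PS !size_XnsubC //; set s := size S; lia.
have cover : [set~ 0 : F] \subset [set y | y ^+ q.+1 == n] :|: [set z | root S z].
  apply/subsetP => z; rewrite !inE => z0.
  have : root (('X^(q.+1) - n%:P) * S) z.
    rewrite PS rootE !hornerE subr_eq0; apply/eqP.
    apply: (mulIf z0); rewrite mul1r -exprSr.
    have -> : (q.+1 * q.-1).+1 = #|F| by rewrite cardF; nia.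
    exact: expf_card.
  by rewrite rootM rootE !hornerE subr_eq0.
have := subset_leq_card cover; rewrite cardsC1 cardF.
have := (leq_card_setU [set y : F | y ^+ q.+1 == n] [set z | root S z]).1.
have : (#|[set z | root S z]| < size S)%N := card_roots_lt_size S0.
rewrite sizeS; have := q_gt1.
move: #|_ :|: _| #|[set z | root S z]| #|[set y : F | y ^+ q.+1 == n]| => cover_card rootsS_card fiber_card.
nia.
Qed.

Lemma card_herm_trace_neq0 : (q * q - q <= #|[set x : F | (x ^+ q + x != 0)%R]|)%N.
Proof.
pose T : {poly F} := 'X^q + 'X.
have sT : size T = q.+1 by rewrite size_polyDl ?size_polyXn ?size_polyX //; exact: q_gt1.
have T0 : T != 0 by rewrite -size_poly_eq0 sT.
pose R := [set z : F | root T z].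
have : (#|R| < size T)%N := card_roots_lt_size T0.
have -> : [set x : F | x ^+ q + x != 0] = ~: R.
  by apply/setP => x; rewrite !inE rootE hornerD hornerXn hornerX.
have := cardsC R; rewrite cardF sT; lia.
Qed.

Lemma herm_monomials_indep (I : finType) (e : I -> nat * nat) (c : I -> F) :
  injective e -> (forall i, (e i).1 + q < q * q)%N -> (forall i, (e i).2 < q)%N ->
  (forall x y : F, x ^+ q + x = y ^+ q.+1 ->
     \sum_i c i * x ^+ (e i).1 * y ^+ (e i).2 = 0) ->
  forall i, c i = 0.
Proof.
move=> e_inj e1 e2 vanish i0.
have fiber_coef x : x ^+ q + x != 0 ->
    forall m, \sum_(i | true && ((e i).2 == m)) c i * x ^+ (e i).1 = 0.
  move=> x0; apply: (coef_monomial_sum_eq0 (A := [set y | y ^+ q.+1 == x ^+ q + x])).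
    move=> i _; apply: leq_trans (leqW (e2 i)) (card_herm_fiber x0 _).
    by rewrite exprDn_pchar // -exprM -cardF expf_card addrC.
  by move=> y; rewrite inE => /eqP/esym/vanish.
have col m : \sum_(i | ((e i).2 == (e i0).2) && ((e i).1 == m)) c i = 0.
  apply: (coef_monomial_sum_eq0 (A := [set x : F | x ^+ q + x != 0])).
    by move=> i _; apply: leq_trans _ card_herm_trace_neq0; have := e1 i; lia.
  by move=> x; rewrite inE => /fiber_coef /(_ (e i0).2).
rewrite -(col (e i0).1) (big_pred1 i0) // => i.
by rewrite andbC -xpair_eqE -!surjective_pairing (inj_eq e_inj).
Qed.

End HermitianIndependence.

Definition herm_eval (F : finFieldType) (q : nat) (f : {poly {poly F}}) :
    'rV[F]_#|herm_pts F q| :=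
  \row_k eval2 f (enum_val k).1 (enum_val k).2.

Lemma herm_eval_hl_code (F : finFieldType) (q : nat) (f : {poly {poly F}}) :
  in_lifted q f -> herm_eval q f \in hl_code F q.
Proof.
move=> fL; apply: memv_span; rewrite mem_filter mem_enum in_setT andbT /hl_wordb.
case: excluded_middle_informative => // -[].
by exists f; split=> // k; rewrite mxE.
Qed.

Definition bimonomial (F : finFieldType) (a b : nat) : {poly {poly F}} :=
  ('X^a)%:P * 'X^b.

Lemma eval2_bimonomial (F : finFieldType) a b (x y : F) :
  eval2 (bimonomial F a b) x y = x ^+ a * y ^+ b.
Proof.
by rewrite /eval2 /bimonomial hornerM hornerC hornerXn hornerM hornerXn -polyC_exp hornerC.
Qed.

Section HermitianLiftedCode.
Variables (F : finFieldType) (q : nat).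
Hypothesis frobq : [pchar F].-nat q.
Hypothesis char2F : 2 \in [pchar F].
Hypothesis cardF : #|F| = (q * q)%N.

Lemma in_lifted_bimonomial K U W :
  (0 < K)%N -> (2 * K <= q)%N -> (2 * (U + W) < q)%N ->
  in_lifted q (bimonomial F (2 * (K * q + U)) (2 * W)).
Proof.
move=> K0 Kq UWq a b.
have frobqK (x : F) : x ^+ q ^+ q = x by rewrite -exprM -cardF expf_card.
have [g [sg onH]] := herm_line_monomial frobq frobqK char2F a b K0 Kq UWq.
by exists g; split=> // t; rewrite inE eval2_bimonomial => /eqP/onH.
Qed.

Lemma hl_code_dim_ge_cube r : (4 * r <= q)%N -> (r ^ 3 <= \dim (hl_code F q))%N.
Proof.
move=> rq.
pose I := ('I_r * 'I_r * 'I_r)%type.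
pose e (i : I) := (2 * (i.1.1.+1 * q + i.1.2), 2 * i.2)%N.
have e_inj : injective e.
  move=> [[K U] W] [[K' U'] W'] [eKU eW].
  have eK : K = K' :> nat.
    have := ltn_ord U; have := ltn_ord U'; nia.
  by congr (_, _, _); apply: val_inj => /=; nia.
pose X := [tuple herm_eval q (bimonomial F (e (enum_val j)).1 (e (enum_val j)).2)
           | j < #|{: I}|].
have X_hl : (<<X>> <= hl_code F q)%VS.
  apply/span_subvP => _ /mapP[j _ ->]; apply: herm_eval_hl_code.
  case: (enum_val j) => [[K U] W] /=; apply: in_lifted_bimonomial => //.
    by have := ltn_ord K; lia.
  by have := ltn_ord U; have := ltn_ord W; lia.
have X_free : free X.
  apply/freeP => k; under eq_bigr => j _ do rewrite -tnth_nth tnth_mktuple.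
  move=> sum0.
  apply: (herm_monomials_indep frobq cardF (e := e \o enum_val)).
  - exact: inj_comp e_inj enum_val_inj.
  - move=> j /=; case: (enum_val j) => [[K U] W] /=.
    by have := ltn_ord K; have := ltn_ord U; nia.
  - by move=> j /=; case: (enum_val j) => [[K U] W] /=; have := ltn_ord W; lia.
  move=> x y onH.
  have xyH : (x, y) \in herm_pts F q by rewrite inE /= onH.
  have := congr1 (fun v : 'rV_#|herm_pts F q| => v 0 (enum_rank_in xyH (x, y))) sum0.
  rewrite /= summxE mxE => coord0; rewrite -[RHS]coord0; apply: eq_bigr => j _.
  by rewrite !mxE enum_rankK_in // eval2_bimonomial mulrA.
have := dimvS X_hl; rewrite (eqnP X_free) size_tuple !card_prod !card_ord.
by rewrite (expnSr r 2) (expnSr r 1) expn1.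
Qed.

End HermitianLiftedCode.

Local Close Scope ring_scope.

Theorem mainTheorem1 (F : finFieldType) (q : nat) :
  (exists m : nat, q = (2 ^ m)%N) -> (4 <= q)%N -> #|F| = (q ^ 2)%N ->
  (7 * q ^ 3 <= 1000 * \dim (hl_code F q))%N.
Proof.
move=> [m ->] q4 cardF.
have m2 : (2 <= m)%N by rewrite -(@leq_exp2l 2).
have char2F : (2 \in [pchar F])%R.
  by apply: (card_finPcharP (n := m * 2)); rewrite // cardF -expnM.
have frobq : [pchar F]%R.-nat (2 ^ m) by rewrite pnatX pnatE ?char2F.
have q4r : (2 ^ m = 4 * 2 ^ (m - 2))%N by rewrite -{1}(subnK m2) expnD mulnC.
have cardF' : #|F| = (2 ^ m * 2 ^ m)%N by rewrite mulnn.
have := hl_code_dim_ge_cube frobq char2F cardF' (eq_leq (esym q4r)).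
rewrite q4r; nia.
Qed.
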